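(* Let $G$ be a finite group, $p$ a prime, and $S$ a Sylow $p$-subgroup of $G$. Then $W_G(S)$ is a subgroup of $Z(S)$.
   Context: An element $x \in S$ is weakly closed in $S$ with respect to $G$ if $x^g = x$ whenever $g \in G$ and $x^g := g^{-1}xg \in S$. $W_G(S)$ denotes the set of all elements of $S$ that are weakly closed in $S$ with respect to $G$. *)

From mathcomp Require Import all_boot all_fingroup all_solvable.
Set Implicit Arguments.
Unset Strict Implicit.
Unset Printing Implicit Defensive.
Local Open Scope group_scope.

Definition weakly_closed_in {gT : finGroupType} (G S : {set gT}) (x : gT) : bool :=
  (x \in S) && [forall g in G, (x ^ g \in S) ==> (x ^ g == x)].

Definition W_set {gT : finGroupType} (G S : {set gT}) : {set gT} :=
  [set x | weakly_closed_in G S x].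

From mathcomp Require Import all_boot all_fingroup all_solvable.
Local Open Scope group_scope.

(* Elements of W_G(S) are central in S, as S acts on itself by conjugation.
   For x, y in W_G(S) and g in G with t = (xy)^g in S, the conjugate S^g
   centralizes t, so it is a Sylow subgroup of C_G(t). Sylow's theorem in
   C_G(t) conjugates S^g, by some c fixing t, onto a Sylow subgroup containing
   the p-subgroup C_S(t), which contains x and y. Weak closure then fixes x and
   y under gc, hence t = t^c = (xy)^(gc) = xy. *)

Section WeaklyClosed.

Context {gT : finGroupType} {G S : {group gT}}.

Lemma weakly_closed_conjg_fix x d :
  x \in W_set G S -> d \in G -> x \in S :^ d -> x ^ d = x.
Proof.
rewrite inE => /andP[_ /forall_inP fixS] dG; rewrite mem_conjg => xdS.
have /implyP/(_ xdS)/eqP xdx := fixS _ (groupVr dG).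
by rewrite -{1}xdx conjgKV.
Qed.

Lemma weakly_closed_sub_center : S \subset G -> W_set G S \subset 'Z(S).
Proof.
move=> sSG; apply/subsetP => x xW.
have xS : x \in S by move: xW; rewrite inE => /andP[].
apply/centerP; split=> // s sS; apply/commgP; rewrite -conjg_fix; apply/eqP.
apply: weakly_closed_conjg_fix xW (subsetP sSG s sS) _.
by rewrite mem_conjg groupJ ?groupV.
Qed.

Lemma Sylow_subcent1_conjg {p g t} :
    p.-Sylow(G) S -> g \in G -> S :^ g \subset 'C[t] ->
  exists2 c, c \in 'C_G[t] & 'C_S[t] \subset S :^ (g * c).
Proof.
move=> sylS gG sSgCt.
have sylSg : p.-Sylow('C_G[t]) (S :^ g)%G.
  have sylSgG : p.-Sylow(G) (S :^ g)%G by rewrite pHallJ.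
  by rewrite (pHall_subl _ _ sylSgG) ?subsetIl // subsetI sSgCt (pHall_sub sylSgG).
have pSCt : p.-group 'C_S[t] by apply: pgroupS (pHall_pgroup sylS); apply: subsetIl.
have [P sylP sSCtP] := Sylow_superset (setSI _ (pHall_sub sylS)) pSCt.
have [c cCt defP] := Sylow_trans sylSg sylP.
by exists c; rewrite // conjsgM -defP.
Qed.

Lemma weakly_closed_mul {p} x y :
  p.-Sylow(G) S -> x \in W_set G S -> y \in W_set G S -> x * y \in W_set G S.
Proof.
move=> sylS xW yW; have sWZ := weakly_closed_sub_center (pHall_sub sylS).
have /centerP[xS _] := subsetP sWZ x xW; have /centerP[yS _] := subsetP sWZ y yW.
have xyZ : x * y \in 'Z(S) by rewrite groupM ?(subsetP sWZ).
rewrite inE /weakly_closed_in groupM //=; apply/forall_inP => g gG.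
apply/implyP; set t := (x * y) ^ g => tS.
have sSgCt : S :^ g \subset 'C[t].
  by rewrite sub_cent1 centJ memJ_conjg; case/setIP: xyZ.
have [c /setIP[cG /cent1P ctc] sSCt] := Sylow_subcent1_conjg sylS gG sSgCt.
have inSgc z : z \in W_set G S -> z ^ (g * c) = z.
  move=> zW; have /setIP[zS cSz] := subsetP sWZ z zW.
  apply: weakly_closed_conjg_fix zW (groupM gG cG) _.
  apply: (subsetP sSCt); rewrite inE zS cent1C.
  by move: cSz; rewrite -sub_cent1 => /subsetP->.
have ttc : t ^ c = t by rewrite /conjg -ctc mulKg.
by apply/eqP; rewrite -ttc /t -conjgM conjMg !inSgc.
Qed.

End WeaklyClosed.

Theorem mainTheorem3 (gT : finGroupType) (G S : {group gT}) (p : nat) :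
  prime p -> S \in 'Syl_p(G) ->
  group_set (W_set G S) && (W_set G S \subset 'Z(S)).
Proof.
move=> _; rewrite inE => sylS.
rewrite weakly_closed_sub_center ?(pHall_sub sylS) // andbT.
apply/group_setP; split; last by move=> x y; apply: weakly_closed_mul sylS.
by rewrite inE /weakly_closed_in group1 /=; apply/forall_inP => g _; rewrite conj1g eqxx implybT.
Qed.
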